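(* Let $\mathcal{T}$ be a locally compact, $\sigma$-compact Hausdorff space, $\mu$ a finite positive Radon measure on $\mathcal{T}$ with $\mu(\mathcal{T})>0$, $1\le p<\infty$ with conjugate $q$. For $\varepsilon>1$ let $S_\varepsilon^p=\{f\in L^q_\mu(\mathcal{T})\text{ real}:\|f\|_q\le\varepsilon,\ \int f\,d\mu=\mu(\mathcal{T})^{1/p}\}$ and $L^p(\mathcal{T})_\varepsilon^+=\{g\in L^p_\mu(\mathcal{T})\text{ real}:\int gf\,d\mu\ge0\ \forall f\in S_\varepsilon^p\}$, and let $L^p(\mathcal{T})_+$ be the $\mu$-a.e. nonnegative functions. If $L^p(\mathcal{T})_+\subseteq L^p(\mathcal{T})_\varepsilon^+$ for some $\varepsilon>1$, then $r_\mu=\inf\{\mu(E):E\ \mu\text{-measurable},\ \mu(E)>0\}>0$. *)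

From HB Require Import structures.
From mathcomp Require Import all_boot all_order all_algebra.
From mathcomp Require Import all_classical all_reals all_analysis.

Set Implicit Arguments.
Unset Strict Implicit.
Unset Printing Implicit Defensive.
Import Order.TTheory GRing.Theory Num.Theory.

Local Open Scope classical_set_scope.
Local Open Scope ring_scope.

(* The Borel sigma-algebra of a topological space T: the measurable type
   whose measurable sets are generated by the open sets of T.  The carrier
   is (convertibly) T itself. *)
Notation borel T := (g_sigma_algebraType (@open T)).

Definition sigma_compact (T : topologicalType) : Prop :=
  exists K : nat -> set T, (forall n, compact (K n)) /\ \bigcup_n K n = [set: T].

Definition radon (T : ptopologicalType) (R : realType)
    (mu : {measure set (borel T) -> \bar R}) : Prop :=
  [/\ (forall x : T, exists U : set T, [/\ open U, U x & (mu U < +oo)%E]),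
      (forall A : set (borel T), measurable A ->
         mu A = ereal_inf [set mu U | U in [set U : set T | open U /\ A `<=` U]])
    & (forall U : set T, open U ->
         mu U = ereal_sup [set mu K | K in [set K : set T | compact K /\ K `<=` U]])].

(* Real-valued L^r functions (representatives; all conditions below are
   invariant under mu-a.e. equality). *)
Definition inL (T : ptopologicalType) (R : realType)
    (mu : {measure set (borel T) -> \bar R}) (r : \bar R) (f : borel T -> R) : Prop :=
  measurable_fun [set: borel T] f /\ (Lnorm mu r (EFin \o f) < +oo)%E.

Definition S_eps (T : ptopologicalType) (R : realType)
    (mu : {measure set (borel T) -> \bar R}) (p eps : R) : set (borel T -> R) :=
  [set f | [/\ inL mu (hoelder_conjugate p%:E) f,
              (Lnorm mu (hoelder_conjugate p%:E) (EFin \o f) <= eps%:E)%E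
            & (\int[mu]_x (f x)%:E = (powR (fine (mu [set: borel T])) p^-1)%:E)%E]].

Definition Lp_eps_plus (T : ptopologicalType) (R : realType)
    (mu : {measure set (borel T) -> \bar R}) (p eps : R) : set (borel T -> R) :=
  [set g | inL mu p%:E g /\
     forall f, S_eps mu p eps f -> (0 <= \int[mu]_x (g x * f x)%:E)%E].

Definition Lp_plus (T : ptopologicalType) (R : realType)
    (mu : {measure set (borel T) -> \bar R}) (p : R) : set (borel T -> R) :=
  [set g | inL mu p%:E g /\ {ae mu, forall x, 0 <= g x}].

Definition r_mu (T : ptopologicalType) (R : realType)
    (mu : {measure set (borel T) -> \bar R}) : \bar R :=
  ereal_inf [set mu E | E in [set E : set (borel T) | measurable E /\ (0 < mu E)%E]].

(* If r_mu = 0, there are measurable sets E of arbitrarily small measure m > 0.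
   Put M = mu(T) and A = M^(1/p).  The function equal to a = (A + m) / (M - m)
   off E and to -1 on E has integral A, and as m -> 0 its L^q norm tends to
   ((A / M)^q M)^(1/q) = 1 (to max (A / M) 1 = 1 when p = 1, q = +oo), so it
   lies in S_eps for m small.  The indicator of E is in L^p_+ but has integral
   -m against it. *)

From HB Require Import structures.
From mathcomp Require Import all_boot all_order all_algebra.
From mathcomp Require Import all_classical all_reals all_analysis.
From mathcomp Require Import measurable_realfun ess_sup_inf ring lra.
Set Implicit Arguments.
Unset Strict Implicit.
Unset Printing Implicit Defensive.
Import Order.TTheory GRing.Theory Num.Theory.
Local Open Scope classical_set_scope.
Local Open Scope ring_scope.

Section dip_height.
Variable R : realType.

Lemma powR_gt1 (x r : R) : 1 < x -> 0 < r -> 1 < x `^ r.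
Proof.
move=> x1 r0; have := gt0_ltr_powR r0 (x := 1) (y := x).
by rewrite powR1; apply; rewrite ?nnegrE ?ler01 // ltW // (lt_trans ltr01).
Qed.

Definition dip_height (p M m : R) : R := (M `^ p^-1 + m) / (M - m).

Lemma dip_height_mean p M m : m != M ->
  dip_height p M m * M - (dip_height p M m + 1) * m = M `^ p^-1.
Proof. by move=> mM; rewrite /dip_height; field; rewrite subr_eq0 eq_sym. Qed.

Lemma dip_height_ge0 p M m : m < M -> 0 <= m -> 0 <= dip_height p M m.
Proof.
move=> mM m0; apply: divr_ge0; first by rewrite addr_ge0 ?powR_ge0.
by rewrite subr_ge0 ltW.
Qed.

Lemma ratio_le_near0 (A M k : R) : 0 < A -> 0 < M -> 1 < k ->
  exists2 δ, 0 < δ <= M & forall m, 0 < m < δ -> (A + m) / (M - m) <= k * (A / M).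
Proof.
move=> A0 M0 k1.
have kAM0 : 0 < M + k * A by rewrite addr_gt0 // mulr_gt0 // (lt_trans ltr01).
exists ((k - 1) * A * M / (M + k * A)).
  rewrite divr_gt0 ?mulr_gt0 ?subr_gt0 //= ler_pdivrMr //; nra.
move=> m /andP[m0]; rewrite ltr_pdivlMr // => small.
have mM : m < M by nra.
by rewrite mulrA ler_pdivlMr // mulrAC ler_pdivrMr ?subr_gt0 //; nra.
Qed.

Lemma dip_height1_le_near0 (M eps : R) : 0 < M -> 1 < eps ->
  exists2 δ, 0 < δ <= M & forall m, 0 < m < δ -> Num.max (dip_height 1 M m) 1 <= eps.
Proof.
move=> M0 eps1; have [δ δ0 small] := ratio_le_near0 M0 M0 eps1.
exists δ => // m /small; rewrite divff ?gt_eqF // mulr1 => le_eps.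
by rewrite ge_max (ltW eps1) andbT /dip_height invr1 powRr1 // ltW.
Qed.

Lemma powR_conj_ratio (M p : R) : 0 < M -> 1 < p ->
  (M `^ p^-1 / M) `^ (p / (p - 1)) * M = 1.
Proof.
move=> M0 p1; have p0 : p != 0 by rewrite gt_eqF // (lt_trans ltr01).
rewrite -[X in _ / X]powRr1 ?ltW // -powRB ?(gt_eqF M0) ?implybT // -powRrM.
have -> : (p^-1 - 1) * (p / (p - 1)) = -1 by field; rewrite subr_eq0 gt_eqF.
by rewrite powR_inv1 ?ltW // mulVf // gt_eqF.
Qed.

Lemma dip_height_gt1_le_near0 (M p eps : R) : 0 < M -> 1 < p -> 1 < eps ->
  exists2 δ, 0 < δ <= M & forall m, 0 < m < δ ->
    (dip_height p M m `^ (p / (p - 1)) * M + m) `^ (p / (p - 1))^-1 <= eps.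
Proof.
move=> M0 p1 eps1; set q := p / (p - 1).
have q0 : 0 < q by rewrite divr_gt0 ?subr_gt0 // (lt_trans ltr01).
set c := eps `^ q.
have c1 : 1 < c by exact: powR_gt1.
(* k^q is halfway between 1 and eps^q; the other half is left for m. *)
set k := ((c + 1) / 2) `^ q^-1.
have kq : k `^ q = (c + 1) / 2.
  by rewrite -powRrM mulVf ?gt_eqF // powRr1 //; lra.
have k1 : 1 < k by rewrite powR_gt1 ?invr_gt0 //; lra.
have [δ /andP[δ0 δM] small] := ratio_le_near0 (powR_gt0 p^-1 M0) M0 k1.
exists (Num.min δ ((c - 1) / 2)).
  by rewrite lt_min δ0 /= ge_min δM; lra.
move=> m /andP[m0]; rewrite lt_min => /andP[mδ mc].
have mM : m < M by exact: lt_le_trans mδ δM.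
have α0 := dip_height_ge0 p mM (ltW m0).
have kA_ge0 : 0 <= k * (M `^ p^-1 / M).
  by rewrite mulr_ge0 ?powR_ge0 // divr_ge0 ?powR_ge0 // ltW.
have αqM : dip_height p M m `^ q * M <= (c + 1) / 2.
  rewrite -kq -[k `^ q]mulr1 -(powR_conj_ratio M0 p1) -/q mulrA.
  rewrite -powRM ?powR_ge0 //; last by rewrite divr_ge0 ?powR_ge0 // ltW.
  rewrite ler_pM2r //; apply: ge0_ler_powR; rewrite ?nnegrE ?(ltW q0) //.
  by apply: small; rewrite m0.
have eps0 : 0 <= eps by rewrite ltW // (lt_trans ltr01).
have -> : eps = c `^ q^-1 by rewrite -powRrM mulfV ?gt_eqF // powRr1.
apply: ge0_ler_powR; rewrite ?nnegrE ?invr_ge0 ?(ltW q0) ?powR_ge0 //.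
  by rewrite addr_ge0 ?mulr_ge0 ?powR_ge0 // ltW.
lra.
Qed.
End dip_height.

Section finite_measure.
Context d (T : measurableType d) (R : realType).
Variable mu : {finite_measure set T -> \bar R}.
Local Open Scope ereal_scope.

Lemma integral_cst_add_indic (E : set T) (a b : R) : measurable E ->
  \int[mu]_x (a + b * \1_E x)%:E = a%:E * mu [set: T] + b%:E * mu E.
Proof.
move=> mE; have mu_int_indic := integrable_indic mu mE.
have int_bE : mu.-integrable [set: T] (fun x => (b * \1_E x)%:E).
  by apply: eq_integrable (integrableZl measurableT b mu_int_indic) => // x _.
under eq_integral do rewrite EFinD.
rewrite integralD_EFin //; last exact: finite_measure_integrable_cst.
rewrite integral_cst //; under eq_integral do rewrite /= EFinM.
by rewrite integralZl // integral_indic // setIT.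
Qed.

Lemma Lnorm_le_integral (r : R) (f h : T -> R) : (0 < r)%R ->
  measurable_fun [set: T] f -> measurable_fun [set: T] h ->
  (forall x, `|f x| `^ r <= h x)%R ->
  'N[mu]_r%:E[EFin \o f] <= (\int[mu]_x (h x)%:E) `^ r^-1.
Proof.
move=> r0 mf mh fh; rewrite unlock /=.
have int_ge0 : 0 <= \int[mu]_x (`|f x| `^ r)%:E.
  by apply: integral_ge0 => x _; rewrite lee_fin; exact: powR_ge0.
have int_le : \int[mu]_x (`|f x| `^ r)%:E <= \int[mu]_x (h x)%:E.
  apply: ge0_le_integral => //.
  - apply/measurable_EFinP; apply: (@measurableT_comp _ _ _ _ _ _ (@powR R ^~ r)).
      exact: measurable_powR.
    exact: measurableT_comp.
  - exact/measurable_EFinP.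
  - by move=> x _; rewrite lee_fin.
apply: gt0_ler_poweR => //; first by rewrite invr_ge0 ltW.
  by rewrite in_itv /= int_ge0 leey.
by rewrite in_itv /= (le_trans int_ge0 int_le) leey.
Qed.

Definition dip (a : R) (E : set T) (x : T) : R := (a - (a + 1) * \1_E x)%R.

Lemma dipE a E x : dip a E x = if x \in E then (-1)%R else a.
Proof. by rewrite /dip indicE; case: (x \in E); rewrite /= ?mulr1 ?mulr0; ring. Qed.

Lemma measurable_dip a E : measurable E -> measurable_fun [set: T] (dip a E).
Proof. by move=> mE; apply: measurable_funB => //; apply: measurable_funM. Qed.

Lemma integral_dip a E : measurable E ->
  \int[mu]_x (dip a E x)%:E = a%:E * mu [set: T] - (a + 1)%:E * mu E.
Proof.
move=> mE; under eq_integral do rewrite /dip -mulNr.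
by rewrite integral_cst_add_indic // EFinN mulNe.
Qed.

Lemma integral_indic_dip a E : measurable E ->
  \int[mu]_x (\1_E x * dip a E x)%:E = - mu E.
Proof.
move=> mE; under eq_integral => x _.
  rewrite (_ : \1_E x * dip a E x = 0 + -1 * \1_E x)%R; last first.
    by rewrite dipE indicE; case: (x \in E); rewrite /=; ring.
  over.
by rewrite integral_cst_add_indic // mul0e add0e EFinN mulN1e.
Qed.

Lemma Lnorm_dip_le r a E : (0 < r)%R -> (0 <= a)%R -> measurable E ->
  'N[mu]_r%:E[EFin \o dip a E] <= ((a `^ r)%:E * mu [set: T] + mu E) `^ r^-1.
Proof.
move=> r0 a0 mE; rewrite -[mu E]mul1e -integral_cst_add_indic //.
apply: Lnorm_le_integral => //; first exact: measurable_dip.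
  by apply: measurable_funD => //; apply: measurable_funM.
move=> x; rewrite dipE indicE; case: (x \in E) => /=.
  by rewrite normrN1 powR1 mulr1 lerDr powR_ge0.
by rewrite mulr0 addr0 ger0_norm.
Qed.

Lemma Lnormy_dip_le a E : (0 <= a)%R ->
  'N[mu]_+oo[EFin \o dip a E] <= (Num.max a 1)%:E.
Proof.
move=> a0; rewrite unlock; case: ifPn => _; last by rewrite lee_fin le_max ler01 orbT.
apply/ess_supP; apply: aeW => x /=; rewrite dipE lee_fin le_max.
by case: (x \in E); rewrite ?normrN1 ?ger0_norm // lexx ?orbT.
Qed.

Lemma gt1_hoelder_conjugateE (p : R) : (1 < p)%R ->
  hoelder_conjugate p%:E = (p / (p - 1))%:E.
Proof.
move=> p1; have p0 : p != 0%R by rewrite gt_eqF // (lt_trans ltr01).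
by rewrite /hoelder_conjugate /= eqe (negbTE p0) -EFinB inver subr_eq0 gt_eqF.
Qed.

Lemma Lnorm_conj_dip_le_near0 (M p eps : R) :
  mu [set: T] = M%:E -> (0 < M)%R -> (1 <= p)%R -> (1 < eps)%R ->
  exists2 δ : R, (0 < δ <= M)%R & forall E (m : R), measurable E -> mu E = m%:E ->
    (0 < m < δ)%R ->
    'N[mu]_(hoelder_conjugate p%:E)[EFin \o dip (dip_height p M m) E] <= eps%:E.
Proof.
move=> muTE M0; rewrite le_eqVlt => /predU1P[<-|p1] eps1.
  have [δ /andP[δ0 δM] small] := dip_height1_le_near0 M0 eps1.
  exists δ => [|E m mE muEE /[dup] /andP[m0 mδ] /small le_eps]; first by rewrite δ0.
  rewrite hoelder_conjugate1; apply: le_trans (Lnormy_dip_le E _) _ => //.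
  by rewrite dip_height_ge0 ?(lt_le_trans mδ) // ltW.
have q0 : (0 < p / (p - 1))%R by rewrite divr_gt0 ?subr_gt0 // (lt_trans ltr01).
have [δ /andP[δ0 δM] small] := dip_height_gt1_le_near0 M0 p1 eps1.
exists δ => [|E m mE muEE /[dup] /andP[m0 mδ] /small le_eps]; first by rewrite δ0.
rewrite gt1_hoelder_conjugateE //; apply: le_trans (Lnorm_dip_le q0 _ mE) _.
  by rewrite dip_height_ge0 ?(lt_le_trans mδ) // ltW.
by rewrite muTE muEE -EFinM -EFinD poweR_EFin lee_fin.
Qed.

End finite_measure.

Section r_mu.
Context (T : ptopologicalType) (R : realType).
Variable mu : {finite_measure set (borel T) -> \bar R}.
Local Open Scope ereal_scope.

Lemma indic_Lp_plus (p : R) (E : set (borel T)) : (0 < p)%R -> measurable E ->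
  Lp_plus mu p \1_E.
Proof.
move=> p0 mE; split; last by apply: aeW => x; rewrite indicE.
split; first exact: measurable_indic.
apply: le_lt_trans (Lnorm_le_integral mu (h := cst 1%R) p0 _ _ _) _.
- exact: measurable_indic.
- exact: measurable_cst.
- move=> x; rewrite indicE; case: (x \in E) => /=; first by rewrite normr1 powR1.
  by rewrite normr0 powR0 // gt_eqF.
- rewrite poweR_lty // (_ : (fun x => _) = cst 1) // integral_cst // mul1e.
  by rewrite ltey_eq fin_num_measure.
Qed.

Lemma r_mu_le0_small_measure : r_mu mu <= 0 -> forall δ : R, (0 < δ)%R ->
  exists E (m : R), [/\ measurable E, mu E = m%:E & (0 < m < δ)%R].
Proof.
move=> r_le0 δ δ0.
have : r_mu mu < δ%:E by apply: le_lt_trans r_le0 _; rewrite lte_fin.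
case/ereal_inf_lt => _ [E [mE E0] <-] Eδ; exists E, (fine (mu E)).
have muEE : mu E = (fine (mu E))%:E by rewrite fineK ?fin_num_measure.
by split; rewrite // -!lte_fin -muEE E0.
Qed.

Lemma dip_in_S_eps_near0 (p eps : R) :
  0 < mu [set: borel T] -> (1 <= p)%R -> (1 < eps)%R ->
  exists2 δ : R, (0 < δ)%R & forall E (m : R), measurable E -> mu E = m%:E ->
    (0 < m < δ)%R ->
    S_eps mu p eps (dip (dip_height p (fine (mu [set: borel T])) m) E).
Proof.
move=> muT0 p1 eps1; set M := fine _.
have muTE : mu [set: borel T] = M%:E by rewrite fineK ?fin_num_measure.
have M0 : (0 < M)%R by rewrite -lte_fin -muTE.
have [δ /andP[δ0 δM] Lnorm_le] := Lnorm_conj_dip_le_near0 muTE M0 p1 eps1.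
exists δ => // E m mE muEE mδ; have Lnorm_le_eps := Lnorm_le E m mE muEE mδ.
split => //.
  by split; [exact: measurable_dip | exact: le_lt_trans Lnorm_le_eps (ltry _)].
rewrite integral_dip // muTE muEE -!EFinM -EFinB dip_height_mean // lt_eqF //.
by apply: lt_le_trans δM; case/andP: mδ.
Qed.

End r_mu.

Theorem lemma5p4 (T : ptopologicalType) (R : realType)
    (mu : {finite_measure set (borel T) -> \bar R}) (p : R) :
  locally_compact [set: T] -> sigma_compact T -> hausdorff_space T ->
  radon mu -> (0 < mu [set: borel T])%E -> 1 <= p ->
  (exists eps : R, 1 < eps /\ Lp_plus mu p `<=` Lp_eps_plus mu p eps) ->
  (0 < r_mu mu)%E.
Proof.
move=> _ _ _ _ muT0 p1 [eps [eps1 Lp_sub]].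
rewrite ltNge; apply/negP => r_le0.
have [δ δ0 S_dip] := dip_in_S_eps_near0 muT0 p1 eps1.
have [E [m [mE muEE mδ]]] := r_mu_le0_small_measure r_le0 δ0.
have p0 : 0 < p by exact: lt_le_trans ltr01 p1.
have [_ /(_ _ (S_dip E m mE muEE mδ))] := Lp_sub _ (indic_Lp_plus mu p0 mE).
by rewrite integral_indic_dip // muEE oppe_ge0 lee_fin leNgt; case/andP: mδ => ->.
Qed.
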